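(* If $G$ and $H$ are almost-3-symmetric graphs, each with at least 3 vertices, then $\mathrm{Inflate}(G,H)$ is almost-3-symmetric.
   Context: All graphs are finite and simple. For a graph $G$ on $n$ vertices and a graph $F$ on $k$ vertices, the density $t(F,G)$ is the number of $k$-element subsets $S\subseteq V(G)$ whose induced subgraph is isomorphic to $F$, divided by $\binom{n}{k}$. $K_2$ is the single edge, $K_3$ the triangle, $P_3$ the path with 3 vertices and 2 edges, $K_2\cup K_1$ the 3-vertex graph with exactly one edge, and $\overline{K_3}$ the 3-vertex graph with no edges. A graph $G$ with at least 3 vertices is almost-3-symmetric if $t(K_2,G)=1/2$, $t(K_3,G)=t(\overline{K_3},G)$, and $t(P_3,G)=t(K_2\cup K_1,G)$. The inflation $\mathrm{Inflate}(G,H)$ (lexicographic product) is the graph with vertex set $V(G)\times V(H)$ in which $(g,h)$ and $(g',h')$ are adjacent iff either $g$ and $g'$ are adjacent in $G$, or $g=g'$ and $h,h'$ are adjacent in $H$. *)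

From mathcomp Require Import all_boot all_order all_algebra.
Set Implicit Arguments. Unset Strict Implicit. Unset Printing Implicit Defensive.
Import GRing.Theory Num.Theory.
Local Open Scope ring_scope.

Definition simple_graph (T : finType) (e : rel T) : Prop :=
  symmetric e /\ irreflexive e.

Definition induces_iso (T : finType) (e : rel T) (k : nat) (F : rel 'I_k)
  (S : {set T}) : bool :=
  [exists f : {ffun 'I_k -> T}, [&& injectiveb f, f @: setT == S &
    [forall i, forall j, e (f i) (f j) == F i j]]].

Definition density (T : finType) (e : rel T) (k : nat) (F : rel 'I_k) : rat :=
  (#|[set S : {set T} | (#|S| == k) && induces_iso e F S]|%:R)
    / ('C(#|T|, k))%:R.

Definition K2 : rel 'I_2 := fun i j => i != j.
Definition K3 : rel 'I_3 := fun i j => i != j.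
Definition coK3 : rel 'I_3 := fun _ _ => false.
Definition P3 : rel 'I_3 := fun i j =>
  ((val i == 1%N) && (val j != 1%N)) || ((val j == 1%N) && (val i != 1%N)).
Definition K2K1 : rel 'I_3 := fun i j =>
  ((val i == 0%N) && (val j == 1%N)) || ((val i == 1%N) && (val j == 0%N)).

Definition almost3sym (T : finType) (e : rel T) : Prop :=
  (3 <= #|T|)%N /\
  density e K2 = 1 / 2%:R /\
  density e K3 = density e coK3 /\
  density e P3 = density e K2K1.

Definition inflate (T U : finType) (eG : rel T) (eH : rel U) : rel (T * U) :=
  fun x y => eG x.1 y.1 || ((x.1 == y.1) && eH x.2 y.2).

From mathcomp Require Import all_boot all_order all_algebra.
From mathcomp Require Import ring zify.
Set Implicit Arguments. Unset Strict Implicit. Unset Printing Implicit Defensive.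
Import GRing.Theory Num.Theory.

(* Densities are counted through embeddings: every induced copy of a k-vertex
   graph F is the image of exactly #|Aut F| embeddings 'I_k -> T, Aut F being
   the set of embeddings of F into itself.  Writing p(a) for the number of ordered pairs of
   distinct vertices with adjacency a, and t(a,b,c) for the number of ordered
   triples of distinct vertices whose pairs 12, 13, 23 have adjacencies a, b, c,
   almost-3-symmetry says p(1) = C(n,2) (hence also p(0) = C(n,2)),
   t(1,1,1) = t(0,0,0) and t(1,0,1) = t(1,0,0).  Sorting triples by
   which of their G-coordinates coincide gives
     t(a,b,c) = |G| t_H(a,b,c) + [b = c] p_G(b) |H| p_H(a)
              + [a = c] p_G(a) |H| p_H(b) + [a = b] p_G(a) |H| p_H(c)
              + t_G(a,b,c) |H|^3,
   and p(0) = p(1) for G and H makes the right-hand sides agree for (1,1,1)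
   and (0,0,0), and for (1,0,1) and (1,0,0). *)

Definition embedding (T : finType) (e : rel T) k (F : rel 'I_k)
    (f : {ffun 'I_k -> T}) : bool :=
  injectiveb f && [forall i, forall j, e (f i) (f j) == F i j].

Lemma embeddingP (T : finType) (e : rel T) k (F : rel 'I_k) (f : {ffun 'I_k -> T}) :
  reflect (injective f /\ forall i j, e (f i) (f j) = F i j) (embedding e F f).
Proof.
apply: (iffP andP) => [[/injectiveP f_inj /forallP f_hom] | [f_inj f_hom]].
  by split=> // i j; apply/eqP; move/forallP: (f_hom i).
by split; [apply/injectiveP | apply/forallP => i; apply/forallP => j; rewrite f_hom].
Qed.

Lemma card_sum_bool (I : finType) (A : {pred I}) : #|A| = \sum_i (i \in A).
Proof. by rewrite -sum1_card big_mkcond. Qed.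

Section Embeddings.
Variables (T : finType) (e : rel T) (k : nat) (F : rel 'I_k).

Lemma induces_isoE S :
  induces_iso e F S = [exists f, embedding e F f && (f @: setT == S)].
Proof.
apply/existsP/existsP => -[f f_ok]; exists f; move: f_ok; rewrite /embedding.
  by case/and3P => -> -> ->.
by case/andP => /andP[-> ->] ->.
Qed.

Lemma induces_iso_card S : induces_iso e F S -> #|S| = k.
Proof.
rewrite induces_isoE => /existsP[f /andP[/embeddingP[f_inj _] /eqP <-]].
by rewrite card_imset // cardsT card_ord.
Qed.

Lemma embeddings_onto_image (f0 : {ffun 'I_k -> T}) : embedding e F f0 ->
  [set f | embedding e F f & f @: setT == f0 @: setT] =
  [set [ffun i => f0 (s i)] | s : {ffun 'I_k -> 'I_k} in embedding F F].
Proof.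
move=> /embeddingP[f0_inj f0_hom]; apply/setP => f; rewrite inE.
apply/andP/imsetP => [[/embeddingP[f_inj f_hom] /eqP f_im] | [s s_aut ->]].
  pose s : {ffun 'I_k -> 'I_k} := [ffun i => odflt i [pick j | f0 j == f i]].
  have f0s i : f0 (s i) = f i.
    rewrite ffunE; case: pickP => [j /eqP // | no_j].
    have : f i \in f0 @: setT by rewrite -f_im imset_f.
    by case/imsetP => j _ fij; move: (no_j j); rewrite fij eqxx.
  exists s; last by apply/ffunP => i; rewrite ffunE f0s.
  apply/embeddingP; split => [i j sij | i j]; first by apply: f_inj; rewrite -!f0s sij.
  by rewrite -f0_hom !f0s f_hom.
move/embeddingP: s_aut => [s_inj s_hom].
have s_onto : s @: setT = setT.
  by apply/eqP; rewrite eqEcard subsetT card_imset /=.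
split; last first.
  rewrite -[in X in _ == X]s_onto -imset_comp.
  by apply/eqP/eq_imset => i; rewrite ffunE.
apply/embeddingP; split => [i j | i j]; rewrite !ffunE ?f0_hom ?s_hom //.
by move/f0_inj/s_inj.
Qed.

Lemma card_embeddings_onto S :
  #|[set f | embedding e F f & f @: setT == S]| = induces_iso e F S * #|embedding F F|.
Proof.
case: (boolP (induces_iso e F S)) => [| no_iso].
  rewrite induces_isoE => /existsP[f0 /andP[f0_emb /eqP <-]].
  rewrite mul1n embeddings_onto_image // card_imset // => s1 s2 /ffunP s12.
  move/embeddingP: f0_emb => [f0_inj _].
  by apply/ffunP => i; apply: f0_inj; move: (s12 i); rewrite !ffunE.
rewrite mul0n; apply/eqP; rewrite cards_eq0; apply/eqP/setP => f; rewrite !inE.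
apply: contraNF no_iso => f_emb; rewrite induces_isoE; apply/existsP; exists f.
by rewrite f_emb.
Qed.

Lemma card_embeddings :
  #|embedding e F| =
  #|[set S : {set T} | (#|S| == k) && induces_iso e F S]| * #|embedding F F|.
Proof.
rewrite -[LHS]sum1_card (partition_big (fun f : {ffun 'I_k -> T} => f @: setT) predT) //=.
rewrite card_sum_bool big_distrl /=; apply: eq_bigr => S _.
rewrite sum1_card inE andb_idl => [|/induces_iso_card -> //].
by rewrite -card_embeddings_onto; apply: eq_card => f; rewrite !inE.
Qed.
End Embeddings.

Lemma embedding_id k (F : rel 'I_k) : embedding F F [ffun i => i].
Proof. by apply/embeddingP; split=> [i j | i j]; rewrite !ffunE. Qed.

Lemma card_aut_gt0 k (F : rel 'I_k) : 0 < #|embedding F F|.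
Proof. by apply/card_gt0P; exists [ffun i => i]; exact: embedding_id. Qed.

Lemma density_embeddings (T : finType) (e : rel T) k (F : rel 'I_k) :
  density e F = (#|embedding e F|%:R / (#|embedding F F| * 'C(#|T|, k))%:R)%R.
Proof.
have aut_neq0 : (#|embedding F F|%:R != 0 :> rat)%R.
  by rewrite pnatr_eq0 -lt0n card_aut_gt0.
rewrite /density card_embeddings !natrM (mulrC #|embedding F F|%:R%R).
by rewrite -mulf_div divff ?mulr1.
Qed.

Lemma eq_divr_nat (m d n t : nat) : 0 < d -> 0 < t ->
  (m%:R / d%:R = n%:R / t%:R :> rat)%R <-> m * t = n * d.
Proof.
move=> d_gt0 t_gt0.
rewrite (rwP eqP) eqr_div ?pnatr_eq0 -?lt0n // -!natrM eqr_nat.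
by split=> /eqP.
Qed.

Lemma density_eq_iff (T : finType) (e : rel T) k (F F' : rel 'I_k) :
  #|embedding F F| = #|embedding F' F'| -> k <= #|T| ->
  density e F = density e F' <-> #|embedding e F| = #|embedding e F'|.
Proof.
move=> aut_eq k_le.
have D_gt0 : 0 < #|embedding F F| * 'C(#|T|, k) by rewrite muln_gt0 card_aut_gt0 bin_gt0.
rewrite !density_embeddings -aut_eq eq_divr_nat //.
by split=> [/eqP | -> //]; rewrite eqn_pmul2r // => /eqP.
Qed.

Definition distinct_adj (T : finType) (e : rel T) (a : bool) (x y : T) : bool :=
  (x != y) && (e x y == a).
Definition ordered_triples (T : finType) (e : rel T) a b c : nat :=
  \sum_x \sum_y \sum_z
    [&& distinct_adj e a x y, distinct_adj e b x z & distinct_adj e c y z].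
Definition ordered_pairs (T : finType) (e : rel T) a : nat :=
  \sum_x \sum_y distinct_adj e a x y.

Definition ord3_1 : 'I_3 := Ordinal (isT : 1 < 3).

Lemma forall_ord2 (P : pred 'I_2) : [forall i, P i] = P ord0 && P ord_max.
Proof.
apply/forallP/andP => [P_all | [P0 P1] [[|[|//]] i_lt]]; first by split.
  by rewrite (_ : Ordinal i_lt = ord0) //; apply: val_inj.
by rewrite (_ : Ordinal i_lt = ord_max) //; apply: val_inj.
Qed.

Lemma forall_ord3 (P : pred 'I_3) :
  [forall i, P i] = [&& P ord0, P ord3_1 & P ord_max].
Proof.
apply/forallP/and3P => [P_all | [P0 P1 P2] [[|[|[|//]]] i_lt]]; first by split.
- by rewrite (_ : Ordinal i_lt = ord0) //; apply: val_inj.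
- by rewrite (_ : Ordinal i_lt = ord3_1) //; apply: val_inj.
by rewrite (_ : Ordinal i_lt = ord_max) //; apply: val_inj.
Qed.

Section SmallEmbeddings.
Variables (T : finType) (e : rel T).
Hypothesis e_simple : simple_graph e.

Lemma card_embeddings2 (F : rel 'I_2) : simple_graph F ->
  #|embedding e F| = ordered_pairs e (F ord0 ord_max).
Proof.
case: e_simple => e_sym e_irr [F_sym F_irr].
pose tup (t : T * T) : {ffun 'I_2 -> T} := [ffun i : 'I_2 => nth t.1 [:: t.1; t.2] i].
rewrite card_sum_bool (reindex tup) /=; last first.
  exists (fun f : {ffun 'I_2 -> T} => (f ord0, f ord_max)) => [[x y] | f _].
    by rewrite !ffunE.
  by apply/ffunP => -[[|[|//]] i_lt]; rewrite !ffunE /=; congr (f _); apply: val_inj.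
rewrite /ordered_pairs pair_bigA; apply: eq_bigr => -[x y] _.
rewrite unfold_in /embedding /injectiveb /dinjectiveb !enum_ordSl enum_ord0.
rewrite !forall_ord2 /= !ffunE /= !inE !e_irr !F_irr [e y x]e_sym [F ord_max _]F_sym.
by rewrite /distinct_adj andbT; case: (e x y == _); rewrite /= ?andbF.
Qed.

Lemma card_embeddings3 (F : rel 'I_3) : simple_graph F ->
  #|embedding e F| =
  ordered_triples e (F ord0 ord3_1) (F ord0 ord_max) (F ord3_1 ord_max).
Proof.
case: e_simple => e_sym e_irr [F_sym F_irr].
pose tup (t : T * T * T) : {ffun 'I_3 -> T} :=
  [ffun i : 'I_3 => nth t.1.1 [:: t.1.1; t.1.2; t.2] i].
rewrite card_sum_bool (reindex tup) /=; last first.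
  exists (fun f : {ffun 'I_3 -> T} => (f ord0, f ord3_1, f ord_max)) => [[[x y] z] | f _].
    by rewrite !ffunE.
  by apply/ffunP => -[[|[|[|//]]] i_lt]; rewrite !ffunE /=; congr (f _); apply: val_inj.
rewrite /ordered_triples !pair_bigA; apply: eq_bigr => -[[x y] z] _.
rewrite unfold_in /embedding /injectiveb /dinjectiveb !enum_ordSl enum_ord0.
rewrite !forall_ord3 /= !ffunE /= !inE !e_irr !F_irr.
rewrite [e y x]e_sym [e z x]e_sym [e z y]e_sym [F ord3_1 ord0]F_sym.
rewrite [F ord_max ord0]F_sym [F ord_max ord3_1]F_sym /distinct_adj.
by case: (x == y); case: (x == z); case: (y == z);
  case: (e x y == _); case: (e x z == _); case: (e y z == _).
Qed.
End SmallEmbeddings.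

Lemma ordered_pairs_complement (T : finType) (e : rel T) :
  ordered_pairs e true + ordered_pairs e false = #|T| * #|T|.-1.
Proof.
rewrite /ordered_pairs -big_split -sum_nat_const; apply: eq_bigr => x _.
rewrite -big_split -(cardC1 x) card_sum_bool; apply: eq_bigr => y _.
by rewrite !inE /distinct_adj [y == x]eq_sym; case: (x != y); case: (e x y).
Qed.

Lemma bin2_mul2 n : 'C(n, 2) * 2 = n * n.-1.
Proof. by rewrite -[2 in LHS]/(2`!) bin_ffact ffactnS ffactn1. Qed.

Lemma bin2M n m : 'C(n * m, 2) = n * 'C(m, 2) + 'C(n, 2) * (m * m).
Proof.
apply/eqP; rewrite -(eqn_pmul2r (isT : 0 < 2)) mulnDl -mulnA mulnAC !bin2_mul2.
apply/eqP; case: n => [|n]; case: m => [|m]; rewrite ?mul0n ?muln0 //.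
have -> : (n.+1 * m.+1).-1 = m + n * m.+1 by rewrite mulSn addSn.
by rewrite !succnK; ring.
Qed.

Lemma simple_K2 : simple_graph K2.
Proof. by split; do ![case=> [[|[|//]] ?]]. Qed.

Lemma simple_K3 : simple_graph K3.
Proof. by split; do ![case=> [[|[|[|//]]] ?]]. Qed.

Lemma simple_coK3 : simple_graph coK3.
Proof. by split; do ![case=> [[|[|[|//]]] ?]]. Qed.

Lemma simple_P3 : simple_graph P3.
Proof. by split; do ![case=> [[|[|[|//]]] ?]]. Qed.

Lemma simple_K2K1 : simple_graph K2K1.
Proof. by split; do ![case=> [[|[|[|//]]] ?]]. Qed.

Lemma card_aut_K2 : #|embedding K2 K2| = 2.
Proof.
rewrite (card_embeddings2 simple_K2 simple_K2).
by rewrite /ordered_pairs !big_ord_recr !big_ord0.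
Qed.

Lemma card_aut_K3 : #|embedding K3 K3| = 6.
Proof.
rewrite (card_embeddings3 simple_K3 simple_K3).
by rewrite /ordered_triples !big_ord_recr !big_ord0.
Qed.

Lemma card_aut_coK3 : #|embedding coK3 coK3| = 6.
Proof.
rewrite (card_embeddings3 simple_coK3 simple_coK3).
by rewrite /ordered_triples !big_ord_recr !big_ord0.
Qed.

Lemma card_aut_P3 : #|embedding P3 P3| = 2.
Proof.
rewrite (card_embeddings3 simple_P3 simple_P3).
by rewrite /ordered_triples !big_ord_recr !big_ord0.
Qed.

Lemma card_aut_K2K1 : #|embedding K2K1 K2K1| = 2.
Proof.
rewrite (card_embeddings3 simple_K2K1 simple_K2K1).
by rewrite /ordered_triples !big_ord_recr !big_ord0.
Qed.

Lemma almost3symE (T : finType) (e : rel T) : simple_graph e -> 3 <= #|T| ->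
  almost3sym e <->
  [/\ ordered_pairs e true = 'C(#|T|, 2),
      ordered_triples e true true true = ordered_triples e false false false &
      ordered_triples e true false true = ordered_triples e true false false].
Proof.
move=> e_simple T_ge3.
have C2_gt0 : 0 < 'C(#|T|, 2) by rewrite bin_gt0 ltnW.
have dK2 : density e K2 = (1 / 2%:R)%R <-> ordered_pairs e true = 'C(#|T|, 2).
  rewrite density_embeddings card_aut_K2 (card_embeddings2 e_simple simple_K2).
  rewrite -[1%R]/(1%:R)%R eq_divr_nat ?muln_gt0 // mul1n (mulnC 2).
  by split=> [/eqP | -> //]; rewrite eqn_pmul2r // => /eqP.
have dK3 : density e K3 = density e coK3 <->
    ordered_triples e true true true = ordered_triples e false false false.
  rewrite density_eq_iff ?card_aut_K3 ?card_aut_coK3 //.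
  rewrite (card_embeddings3 e_simple simple_K3).
  by rewrite (card_embeddings3 e_simple simple_coK3).
have dP3 : density e P3 = density e K2K1 <->
    ordered_triples e true false true = ordered_triples e true false false.
  rewrite density_eq_iff ?card_aut_P3 ?card_aut_K2K1 //.
  rewrite (card_embeddings3 e_simple simple_P3).
  by rewrite (card_embeddings3 e_simple simple_K2K1).
by split=> [[_ [/dK2 ? [/dK3 ? /dP3 ?]]] | [/dK2 ? /dK3 ? /dP3 ?]].
Qed.

Section NestedSums.
Variable I : finType.

Lemma sum_delta (x : I) (F : I -> nat) : \sum_y (x == y) * F y = F x.
Proof.
rewrite (bigD1 x) //= eqxx mul1n big1 ?addn0 // => y /negbTE.
by rewrite eq_sym => ->.
Qed.

Lemma sum2_mulr (F : I -> I -> nat) c :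
  \sum_i \sum_j F i j * c = (\sum_i \sum_j F i j) * c.
Proof. by rewrite big_distrl; apply: eq_bigr => i _; rewrite big_distrl. Qed.

Lemma sum3_const_last (F : I -> I -> nat) :
  \sum_i \sum_j \sum_(k : I) F i j = #|I| * \sum_i \sum_j F i j.
Proof.
rewrite big_distrr; apply: eq_bigr => i _; rewrite big_distrr.
by apply: eq_bigr => j _; rewrite sum_nat_const.
Qed.

Lemma sum3_const_mid (F : I -> I -> nat) :
  \sum_i \sum_(j : I) \sum_k F i k = #|I| * \sum_i \sum_k F i k.
Proof. by rewrite big_distrr; apply: eq_bigr => i _; rewrite sum_nat_const. Qed.

Lemma sum2_delta c : \sum_i \sum_(j : I) (i == j) * c = #|I| * c.
Proof. by rewrite -sum_nat_const; apply: eq_bigr => i _; apply: sum_delta. Qed.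

Lemma sum3_delta12 (X : I -> I -> nat) :
  \sum_i \sum_j \sum_k (i == j) * X i k = \sum_i \sum_k X i k.
Proof.
apply: eq_bigr => i _; transitivity (\sum_j (i == j) * \sum_k X j k).
  by apply: eq_bigr => j _; rewrite big_distrr; apply: eq_bigr => k _; case: eqP => [<-|].
exact: sum_delta.
Qed.

Lemma sum3_delta13 (X : I -> I -> nat) :
  \sum_i \sum_j \sum_k (i == k) * X i j = \sum_i \sum_j X i j.
Proof. by apply: eq_bigr => i _; apply: eq_bigr => j _; rewrite sum_delta. Qed.

Lemma sum3_delta23 (X : I -> I -> nat) :
  \sum_i \sum_j \sum_k (j == k) * X i j = \sum_i \sum_j X i j.
Proof. by apply: eq_bigr => i _; apply: eq_bigr => j _; rewrite sum_delta. Qed.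

Lemma sum3_mulr (F : I -> I -> I -> nat) c :
  \sum_i \sum_j \sum_k F i j k * c = (\sum_i \sum_j \sum_k F i j k) * c.
Proof. by rewrite big_distrl; apply: eq_bigr => i _; rewrite sum2_mulr. Qed.

Lemma sum3D (F G : I -> I -> I -> nat) :
  \sum_i \sum_j \sum_k (F i j k + G i j k) =
  \sum_i \sum_j \sum_k F i j k + \sum_i \sum_j \sum_k G i j k.
Proof.
rewrite -big_split; apply: eq_bigr => i _; rewrite -big_split.
by apply: eq_bigr => j _; rewrite -big_split.
Qed.
End NestedSums.

Lemma sum_pairE (I J : finType) (F : I * J -> nat) :
  \sum_x F x = \sum_i \sum_j F (i, j).
Proof. by rewrite [RHS]pair_bigA; apply: eq_bigr => -[]. Qed.

Lemma sum2_pairE (I J : finType) (F : I * J -> I * J -> nat) :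
  \sum_x \sum_y F x y = \sum_i1 \sum_i2 \sum_j1 \sum_j2 F (i1, j1) (i2, j2).
Proof.
rewrite sum_pairE; apply: eq_bigr => i1 _; rewrite [RHS]exchange_big.
by apply: eq_bigr => j1 _; rewrite sum_pairE.
Qed.

Lemma sum3_pairE (I J : finType) (F : I * J -> I * J -> I * J -> nat) :
  \sum_x \sum_y \sum_z F x y z =
  \sum_i1 \sum_i2 \sum_i3 \sum_j1 \sum_j2 \sum_j3 F (i1, j1) (i2, j2) (i3, j3).
Proof.
rewrite sum_pairE.
transitivity
  (\sum_i1 \sum_j1 \sum_i2 \sum_j2 \sum_i3 \sum_j3 F (i1, j1) (i2, j2) (i3, j3)).
  apply: eq_bigr => i1 _; apply: eq_bigr => j1 _; rewrite sum_pairE.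
  by apply: eq_bigr => i2 _; apply: eq_bigr => j2 _; rewrite sum_pairE.
apply: eq_bigr => i1 _; rewrite exchange_big; apply: eq_bigr => i2 _.
transitivity (\sum_j1 \sum_i3 \sum_j2 \sum_j3 F (i1, j1) (i2, j2) (i3, j3)).
  by apply: eq_bigr => j1 _; rewrite exchange_big.
by rewrite exchange_big.
Qed.

Lemma distinct_adj_irr (T : finType) (e : rel T) a x : distinct_adj e a x x = false.
Proof. by rewrite /distinct_adj eqxx. Qed.

Lemma distinct_adj_and (T : finType) (e : rel T) a b x y :
  distinct_adj e a x y && distinct_adj e b x y = distinct_adj e a x y && (a == b).
Proof. by rewrite /distinct_adj; case: (x != y) (e x y) a b => [] [] [] []. Qed.

Lemma distinct_adj_sym (T : finType) (e : rel T) : symmetric e ->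
  forall a x y, distinct_adj e a x y = distinct_adj e a y x.
Proof. by move=> e_sym a x y; rewrite /distinct_adj eq_sym e_sym. Qed.

Lemma simple_inflate (T U : finType) (eG : rel T) (eH : rel U) :
  simple_graph eG -> simple_graph eH -> simple_graph (inflate eG eH).
Proof.
move=> [eG_sym eG_irr] [eH_sym eH_irr]; split=> [x y | x].
  by rewrite /inflate eG_sym eH_sym eq_sym.
by rewrite /inflate eG_irr eH_irr andbF.
Qed.

Section Inflation.
Variables (T U : finType) (eG : rel T) (eH : rel U).
Hypotheses (eG_sym : symmetric eG) (eG_irr : irreflexive eG).
Local Notation eI := (inflate eG eH).

Lemma distinct_adj_inflate a g1 h1 g2 h2 :
  distinct_adj eI a (g1, h1) (g2, h2) =
  if g1 == g2 then distinct_adj eH a h1 h2 else distinct_adj eG a g1 g2.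
Proof.
rewrite /distinct_adj /inflate /= xpair_eqE.
by case: eqVneq => [<- | g12] /=; rewrite ?eG_irr ?andbF ?orbF.
Qed.

Lemma fiber_pairs a g1 g2 :
  \sum_h1 \sum_h2 distinct_adj eI a (g1, h1) (g2, h2) =
  (g1 == g2) * ordered_pairs eH a + distinct_adj eG a g1 g2 * (#|U| * #|U|).
Proof.
case: (eqVneq g1 g2) => [<- | g12]; rewrite ?distinct_adj_irr /= ?muln0 ?addn0 ?mul1n.
  rewrite /ordered_pairs.
  by apply: eq_bigr => h1 _; apply: eq_bigr => h2 _; rewrite distinct_adj_inflate eqxx.
transitivity (\sum_(h1 : U) \sum_(h2 : U) distinct_adj eG a g1 g2).
  apply: eq_bigr => h1 _; apply: eq_bigr => h2 _.
  by rewrite distinct_adj_inflate (negbTE g12).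
by rewrite !sum_nat_const; ring.
Qed.

Lemma ordered_pairs_inflate a :
  ordered_pairs eI a = #|T| * ordered_pairs eH a + ordered_pairs eG a * (#|U| * #|U|).
Proof.
rewrite /ordered_pairs sum2_pairE.
under eq_bigr => g1 _ do under eq_bigr => g2 _ do rewrite fiber_pairs.
under eq_bigr => g1 _ do rewrite big_split /=.
by rewrite big_split /= sum2_delta sum2_mulr.
Qed.

Variables a b c : bool.

Definition fiber_triples g1 g2 g3 : nat :=
  \sum_h1 \sum_h2 \sum_h3 [&& distinct_adj eI a (g1, h1) (g2, h2),
     distinct_adj eI b (g1, h1) (g3, h3) & distinct_adj eI c (g2, h2) (g3, h3)].

Lemma fiber_triples_diag g : fiber_triples g g g = ordered_triples eH a b c.
Proof.
by apply: eq_bigr => h1 _; apply: eq_bigr => h2 _; apply: eq_bigr => h3 _;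
  rewrite !distinct_adj_inflate eqxx.
Qed.

Lemma fiber_triples_12 g g' : g != g' ->
  fiber_triples g g g' =
  distinct_adj eG b g g' * ((b == c) * (#|U| * ordered_pairs eH a)).
Proof.
move=> gg'; rewrite mulnA (mulnC _ (#|U| * _)) -mulnA.
rewrite /ordered_pairs -sum2_mulr -sum3_const_last.
apply: eq_bigr => h1 _; apply: eq_bigr => h2 _; apply: eq_bigr => h3 _.
by rewrite !distinct_adj_inflate eqxx (negbTE gg') distinct_adj_and !mulnb.
Qed.

Lemma fiber_triples_13 g g' : g != g' ->
  fiber_triples g g' g =
  distinct_adj eG a g g' * ((a == c) * (#|U| * ordered_pairs eH b)).
Proof.
move=> gg'; rewrite mulnA (mulnC _ (#|U| * _)) -mulnA.
rewrite /ordered_pairs -sum2_mulr -sum3_const_mid.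
apply: eq_bigr => h1 _; apply: eq_bigr => h2 _; apply: eq_bigr => h3 _.
rewrite !distinct_adj_inflate eqxx [g' == g]eq_sym (negbTE gg').
by rewrite (distinct_adj_sym eG_sym c) andbCA distinct_adj_and !mulnb.
Qed.

Lemma fiber_triples_23 g g' : g != g' ->
  fiber_triples g' g g =
  distinct_adj eG a g' g * ((a == b) * (#|U| * ordered_pairs eH c)).
Proof.
move=> gg'; rewrite mulnA (mulnC _ (#|U| * _)) -mulnA.
rewrite /ordered_pairs -sum2_mulr -sum_nat_const.
apply: eq_bigr => h1 _; apply: eq_bigr => h2 _; apply: eq_bigr => h3 _.
rewrite !distinct_adj_inflate eqxx eq_sym (negbTE gg').
by rewrite andbA distinct_adj_and andbC !mulnb.
Qed.

Lemma fiber_triples_distinct g1 g2 g3 : g1 != g2 -> g1 != g3 -> g2 != g3 ->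
  fiber_triples g1 g2 g3 =
  [&& distinct_adj eG a g1 g2, distinct_adj eG b g1 g3 & distinct_adj eG c g2 g3]
    * #|U| ^ 3.
Proof.
move=> g12 g13 g23.
transitivity (\sum_(h1 : U) \sum_(h2 : U) \sum_(h3 : U)
  [&& distinct_adj eG a g1 g2, distinct_adj eG b g1 g3 & distinct_adj eG c g2 g3]).
  by apply: eq_bigr => h1 _; apply: eq_bigr => h2 _; apply: eq_bigr => h3 _;
    rewrite !distinct_adj_inflate (negbTE g12) (negbTE g13) (negbTE g23).
by rewrite !sum_nat_const; ring.
Qed.

Lemma fiber_triplesE g1 g2 g3 :
  fiber_triples g1 g2 g3 =
    (g1 == g2) * ((g1 == g3) * ordered_triples eH a b c)
  + (g1 == g2) * (distinct_adj eG b g1 g3 * ((b == c) * (#|U| * ordered_pairs eH a)))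
  + (g1 == g3) * (distinct_adj eG a g1 g2 * ((a == c) * (#|U| * ordered_pairs eH b)))
  + (g2 == g3) * (distinct_adj eG a g1 g2 * ((a == b) * (#|U| * ordered_pairs eH c)))
  + [&& distinct_adj eG a g1 g2, distinct_adj eG b g1 g3 & distinct_adj eG c g2 g3]
      * #|U| ^ 3.
Proof.
case: (eqVneq g1 g2) => [<- | g12]; case: (eqVneq g1 g3) => [<- | g13].
- by rewrite fiber_triples_diag !distinct_adj_irr /=; ring.
- by rewrite fiber_triples_12 // !distinct_adj_irr /=; ring.
- rewrite fiber_triples_13 // [g2 == g1]eq_sym (negbTE g12).
  by rewrite !distinct_adj_irr andbF /=; ring.
case: (eqVneq g2 g3) => [-> | g23].
  by rewrite fiber_triples_23 1?eq_sym // distinct_adj_irr !andbF /=; ring.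
by rewrite fiber_triples_distinct //=; ring.
Qed.

Lemma ordered_triples_inflate :
  ordered_triples eI a b c =
    #|T| * ordered_triples eH a b c
  + ordered_pairs eG b * ((b == c) * (#|U| * ordered_pairs eH a))
  + ordered_pairs eG a * ((a == c) * (#|U| * ordered_pairs eH b))
  + ordered_pairs eG a * ((a == b) * (#|U| * ordered_pairs eH c))
  + ordered_triples eG a b c * #|U| ^ 3.
Proof.
transitivity (\sum_g1 \sum_g2 \sum_g3 fiber_triples g1 g2 g3).
  by rewrite /ordered_triples sum3_pairE.
under eq_bigr => g1 _ do under eq_bigr => g2 _ do under eq_bigr => g3 _ do
  rewrite fiber_triplesE.
rewrite !sum3D !sum3_delta12 sum3_delta13 sum3_delta23 sum2_delta !sum2_mulr sum3_mulr.
by [].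
Qed.
End Inflation.

Theorem mainTheorem17 (T U : finType) (eG : rel T) (eH : rel U) :
  simple_graph eG -> simple_graph eH ->
  (3 <= #|T|)%N -> (3 <= #|U|)%N ->
  almost3sym eG -> almost3sym eH ->
  almost3sym (inflate eG eH).
Proof.
move=> G_simple H_simple T_ge3 U_ge3.
have TU_ge3 : 3 <= #|{: T * U}| by rewrite card_prod; nia.
move=> /(almost3symE G_simple T_ge3) [G2 G3 GP] /(almost3symE H_simple U_ge3) [H2 H3 HP].
have G0 : ordered_pairs eG false = ordered_pairs eG true.
  by have := ordered_pairs_complement eG; rewrite -bin2_mul2 G2; lia.
have H0 : ordered_pairs eH false = ordered_pairs eH true.
  by have := ordered_pairs_complement eH; rewrite -bin2_mul2 H2; lia.
have [eG_sym eG_irr] := G_simple.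
apply/(almost3symE (simple_inflate G_simple H_simple) TU_ge3).
rewrite !ordered_triples_inflate // ordered_pairs_inflate // card_prod bin2M /=.
split.
- by rewrite G2 H2.
- by rewrite G3 H3 G0 H0.
- by rewrite GP HP G0 H0; ring.
Qed.
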